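(* Let $(X,\mathcal{M})$ be a measurable space, $\Sigma$ a compact Hausdorff group with Haar probability measure $\mu_\Sigma$, and $T:\Sigma\times X\to X$ a measurable group action. Let $V\subset\mathcal{M}_b(X)$ be a separable reproducing kernel Hilbert space with reproducing kernel $k:X\times X\to\mathbb{R}$, and $\Gamma=\{\gamma\in V:\|\gamma\|_V\le1\}$. If $k$ is $\Sigma$-invariant, i.e. $k(T_\sigma(x),T_\sigma(y))=k(x,y)$ for all $\sigma\in\Sigma$, $x,y\in X$, then $S_\Sigma[\Gamma]\subset\Gamma$.
   Context: $S_\Sigma[\gamma](x)=\int_\Sigma\gamma(T_\sigma(x))\mu_\Sigma(d\sigma)$. *)

From HB Require Import structures.
From mathcomp Require Import all_boot all_order all_algebra.
From mathcomp Require Import all_classical all_reals all_analysis.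
Set Implicit Arguments. Unset Strict Implicit. Unset Printing Implicit Defensive.
Import Order.TTheory GRing.Theory Num.Theory.
Import numFieldNormedType.Exports.
Local Open Scope classical_set_scope.
Local Open Scope ring_scope.

Definition borel (S : ptopologicalType) := g_sigma_algebraType (@open S).

Definition compact_hausdorff_group (S : ptopologicalType)
    (mul : S -> S -> S) (inv : S -> S) (one : S) : Prop :=
  [/\ [/\ associative mul, left_id one mul & left_inverse one inv mul],
      continuous (fun p : S * S => mul p.1 p.2), continuous inv,
      compact [set: S] & hausdorff_space S].

Definition haar_probability (S : ptopologicalType) (R : realType)
    (mul : S -> S -> S) (mu : probability (borel S) R) : Prop :=
  [/\ (forall (s : S) (A : set (borel S)), measurable A ->
          mu [set mul s a | a in A] = mu A),
      (forall A : set (borel S), measurable A ->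
          mu A = ereal_inf [set mu U | U in [set U : set (borel S) |
                                     @open S U /\ A `<=` U]]) &
      (forall U : set (borel S), @open S U ->
          mu U = ereal_sup [set mu K | K in [set K : set (borel S) |
                                      @compact S K /\ K `<=` U]])].

Definition group_action (S X : Type) (mul : S -> S -> S) (one : S)
    (T : S * X -> X) : Prop :=
  (forall x, T (one, x) = x) /\
  (forall s t x, T (mul s t, x) = T (s, T (t, x))).

Definition ipnorm (R : realType) (F : Type) (ip : F -> F -> R) (f : F) : R :=
  Num.sqrt (ip f f).

Definition bounded_measurable d (X : measurableType d) (R : realType)
    (f : X -> R) : Prop :=
  measurable_fun [set: X] f /\ exists M : R, forall x, `|f x| <= M.

Definition separable_rkhs d (X : measurableType d) (R : realType)
    (V : set (X -> R)) (ip : (X -> R) -> (X -> R) -> R)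
    (k : X -> X -> R) : Prop :=
  [/\ [/\
      (forall f, V f -> bounded_measurable f),
      [/\ V (fun _ => 0),
          (forall f g, V f -> V g -> V (f \+ g)) &
          (forall (a : R) f, V f -> V (fun x => a * f x))] &
      [/\ (forall f g, V f -> V g -> ip f g = ip g f),
          (forall f g h, V f -> V g -> V h -> ip (f \+ g) h = ip f h + ip g h),
          (forall (a : R) f g, V f -> V g -> ip (fun x => a * f x) g = a * ip f g),
          (forall f, V f -> 0 <= ip f f) &
          (forall f, V f -> ip f f = 0 -> f = (fun _ => 0))]],
      (forall u : nat -> X -> R, (forall n, V (u n)) ->
         (forall e : R, 0 < e -> exists N, forall m n, (N <= m)%N -> (N <= n)%N ->
             ipnorm ip (u m \- u n) < e) ->
         exists2 f, V f &
           (fun n => ipnorm ip (u n \- f)) @ \oo --> (0 : R)),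
      (exists D : set (X -> R), [/\ countable D, D `<=` V &
         forall f, V f -> forall e : R, 0 < e ->
           exists2 g, D g & ipnorm ip (f \- g) < e]) &
      (forall x, V (k x) /\ forall f, V f -> ip f (k x) = f x)].

Definition symmetrize (S : ptopologicalType) d (X : measurableType d)
    (R : realType) (mu : probability (borel S) R)
    (T : borel S * X -> X) (gamma : X -> R) : X -> R :=
  fun x => Rintegral mu [set: borel S] (fun s => gamma (T (s, x))).

From HB Require Import structures.
From mathcomp Require Import all_boot all_order all_algebra.
From mathcomp Require Import all_classical all_reals all_analysis.
From mathcomp Require Import ring lra.
Import Order.TTheory GRing.Theory Num.Theory.
Import numFieldNormedType.Exports.
Local Open Scope classical_set_scope.
Local Open Scope ring_scope.
Set Implicit Arguments. Unset Strict Implicit.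

(* A function h lies in the closed ball of radius C of the RKHS as soon as
   |sum_i a_i h(x_i)| <= C ||sum_i a_i k(x_i, .)|| for every finite kernel sum.
   Indeed the energy E(r) = ||K r||^2 / 2 - sum_i a_i h(x_i) of the kernel sum
   K r = sum_i a_i k(x_i, .) is then bounded below by -C^2/2.  By the
   parallelogram law a minimizing sequence of kernel sums is Cauchy, and testing
   minimality in the direction k(x, .) shows that it converges to h at every x,
   so its limit in V is h; then E(r) = (||K r - h||^2 - ||h||^2) / 2 >= -C^2/2
   gives ||h|| <= C.
   For h = S_Sigma[gamma], sum_i a_i h(x_i) is the mu-average over sigma of
   <gamma, sum_i a_i k(T_sigma x_i, .)>, and the invariance of k makes the norm
   of this kernel sum independent of sigma, so the criterion holds with
   C = ||gamma|| <= 1. *)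

Section RealFacts.
Variable R : realType.

Lemma quadratic_ge_discriminant (e b c : R) : 0 <= c ->
  (forall t, - e <= b * t + c * t ^+ 2) -> b ^+ 2 <= 4 * e * c.
Proof.
rewrite le_eqVlt => /orP[/eqP c0 ge_e | c_gt0 ge_e].
  have [->|b_neq0] := eqVneq b 0; first by rewrite expr0n /= -c0 mulr0.
  have := ge_e (- (e + 1) / b); rewrite -c0 mul0r addr0 mulrC divfK //; lra.
have := ge_e (- b / (2 * c)).
have -> : b * (- b / (2 * c)) + c * (- b / (2 * c)) ^+ 2 = - (b ^+ 2 / (4 * c)).
  by field; rewrite gt_eqF.
by rewrite lerN2 ler_pdivrMr ?mulr_gt0 //; nra.
Qed.

Lemma cvg_of_sqr_dist_le (a b : nat -> R) (c l : R) :
  (forall n, (a n - l) ^+ 2 <= c * b n) -> b @ \oo --> 0 -> a @ \oo --> l.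
Proof.
move=> ab /cvgrPdist_lt b0; apply/cvgrPdist_lt => e e_gt0.
have c1_gt0 : 0 < `|c| + 1 by rewrite ltr_wpDl.
near=> n.
have bn : `|b n| < e ^+ 2 / (`|c| + 1).
  by rewrite -normrN -sub0r; near: n; apply: b0; rewrite divr_gt0 ?exprn_gt0.
have cbn : c * b n <= `|c| * `|b n| by rewrite -normrM ler_norm.
have : `|l - a n| ^+ 2 < e ^+ 2.
  rewrite distrC real_normK ?num_real //; apply: (le_lt_trans (ab n)).
  apply: (le_lt_trans cbn); rewrite ltr_pdivlMr // in bn.
  by have := normr_ge0 (b n); nra.
by rewrite ltr_pXn2r // ?nnegrE ?ltW.
Unshelve. all: by end_near.
Qed.

Lemma exists_minimizing_seq (T : Type) (t0 : T) (Q : T -> R) (lb : R) :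
  (forall t, lb <= Q t) ->
  exists2 m, (forall t, m <= Q t) & exists u : nat -> T, forall n, Q (u n) <= m + n.+1%:R^-1.
Proof.
move=> lbQ; pose E := [set Q t | t in [set: T]].
have infE : has_inf E by split; [exists (Q t0), t0 | exists lb => _ [t _ <-]].
exists (inf E) => [t|]; first by apply: (ge_inf infE.2); exists t.
suff /choice[u uP] : forall n, exists t, Q t <= inf E + n.+1%:R^-1 by exists u.
move=> n; have [_ [t _ <-] /ltW Qt] := inf_adherent (harmonic_gt0 n : 0 < n.+1%:R^-1) infE.
by exists t.
Qed.

End RealFacts.

Section InnerProduct.
Variables (R : realType) (X : Type) (V : set (X -> R)).
Variable ip : (X -> R) -> (X -> R) -> R.
Hypothesis VD : forall f g, V f -> V g -> V (f \+ g).
Hypothesis VZ : forall (a : R) f, V f -> V (fun x => a * f x).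
Hypothesis ipC : forall f g, V f -> V g -> ip f g = ip g f.
Hypothesis ipDl : forall f g h, V f -> V g -> V h -> ip (f \+ g) h = ip f h + ip g h.
Hypothesis ipZl : forall (a : R) f g, V f -> V g -> ip (fun x => a * f x) g = a * ip f g.
Hypothesis ip_ge0 : forall f, V f -> 0 <= ip f f.

Definition lincomb (a : R) (f : X -> R) (b : R) (g : X -> R) : X -> R :=
  fun x => a * f x + b * g x.

Lemma sub_lincomb (f g : X -> R) : f \- g = lincomb 1 f (-1) g.
Proof. by apply: funext => x; rewrite /lincomb /= mul1r mulN1r. Qed.

Lemma V_lincomb a f b g : V f -> V g -> V (lincomb a f b g).
Proof. by move=> Vf Vg; exact: VD (VZ a Vf) (VZ b Vg). Qed.

Lemma ip_lincombl a f b g h : V f -> V g -> V h ->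
  ip (lincomb a f b g) h = a * ip f h + b * ip g h.
Proof. by move=> Vf Vg Vh; rewrite ipDl ?ipZl //; exact: VZ. Qed.

Lemma ip_lincombr a f b g h : V f -> V g -> V h ->
  ip h (lincomb a f b g) = a * ip h f + b * ip h g.
Proof.
by move=> Vf Vg Vh; rewrite ipC ?ip_lincombl ?(ipC Vh) //; exact: V_lincomb.
Qed.

Lemma ip_lincomb a f b g c e : V f -> V g ->
  ip (lincomb a f b g) (lincomb c f e g) =
  a * c * ip f f + (a * e + b * c) * ip f g + b * e * ip g g.
Proof.
move=> Vf Vg; have Vce := V_lincomb c e Vf Vg.
by rewrite ip_lincombl // !ip_lincombr // (ipC Vg Vf); ring.
Qed.

Lemma ip0r f : V f -> ip f (fun=> 0) = 0.
Proof.
move=> Vf; have -> : (fun=> 0) = lincomb 0 f 0 f.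
  by apply: funext => x; rewrite /lincomb !mul0r addr0.
by rewrite ip_lincombr // !mul0r addr0.
Qed.

Lemma ip_cauchy_schwarz f g : V f -> V g -> ip f g ^+ 2 <= ip f f * ip g g.
Proof.
move=> Vf Vg.
suff : (2 * ip f g) ^+ 2 <= 4 * ip f f * ip g g by rewrite exprMn; lra.
apply: quadratic_ge_discriminant (ip_ge0 Vg) _ => t.
have := ip_ge0 (V_lincomb 1 t Vf Vg); rewrite ip_lincomb //; lra.
Qed.

Lemma sqr_ipnorm f : V f -> ipnorm ip f ^+ 2 = ip f f.
Proof. by move=> Vf; rewrite sqr_sqrtr ?ip_ge0. Qed.

Lemma normr_ip_le f g : V f -> V g -> `|ip f g| <= ipnorm ip f * ipnorm ip g.
Proof.
move=> Vf Vg; rewrite -ler_sqr ?nnegrE ?mulr_ge0 ?sqrtr_ge0 //.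
by rewrite real_normK ?num_real // exprMn !sqr_ipnorm // ip_cauchy_schwarz.
Qed.

Section Kernel.
Variable k : X -> X -> R.
Hypothesis V0 : V (fun=> 0).
Hypothesis k_reproducing : forall x, V (k x) /\ forall f, V f -> ip f (k x) = f x.

Definition kernel_sum (r : seq (R * X)) : X -> R :=
  fun y => \sum_(p <- r) p.1 * k p.2 y.

Definition eval_sum (h : X -> R) (r : seq (R * X)) : R := \sum_(p <- r) p.1 * h p.2.

Lemma kernel_sum_nil : kernel_sum [::] = fun=> 0.
Proof. by apply: funext => y; rewrite /kernel_sum big_nil. Qed.

Lemma kernel_sum_cons p r :
  kernel_sum (p :: r) = lincomb p.1 (k p.2) 1 (kernel_sum r).
Proof. by apply: funext => y; rewrite /kernel_sum /lincomb big_cons mul1r. Qed.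

Definition lincomb_pts (a : R) (r : seq (R * X)) (b : R) (s : seq (R * X)) :=
  [seq (a * p.1, p.2) | p <- r] ++ [seq (b * p.1, p.2) | p <- s].

Lemma kernel_sum_lincomb a r b s :
  kernel_sum (lincomb_pts a r b s) = lincomb a (kernel_sum r) b (kernel_sum s).
Proof.
apply: funext => y; rewrite /kernel_sum /lincomb big_cat !big_map !mulr_sumr.
by congr (_ + _); apply: eq_bigr => p _; rewrite mulrA.
Qed.

Lemma eval_sum_lincomb h a r b s :
  eval_sum h (lincomb_pts a r b s) = a * eval_sum h r + b * eval_sum h s.
Proof.
rewrite /eval_sum big_cat !big_map !mulr_sumr.
by congr (_ + _); apply: eq_bigr => p _; rewrite mulrA.
Qed.

Lemma kernel_sum1 x : kernel_sum [:: (1, x)] = k x.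
Proof. by apply: funext => y; rewrite /kernel_sum big_seq1 mul1r. Qed.

Lemma eval_sum1 h x : eval_sum h [:: (1, x)] = h x.
Proof. by rewrite /eval_sum big_seq1 mul1r. Qed.

Lemma V_kernel_sum r : V (kernel_sum r).
Proof.
elim: r => [|p r IHr]; first by rewrite kernel_sum_nil.
by rewrite kernel_sum_cons; exact: V_lincomb (k_reproducing _).1 IHr.
Qed.

Lemma ip_kernel_sum f r : V f -> ip f (kernel_sum r) = eval_sum f r.
Proof.
move=> Vf; elim: r => [|p r IHr]; first by rewrite kernel_sum_nil ip0r // /eval_sum big_nil.
have [Vk k_ip] := k_reproducing p.2; have Vr := V_kernel_sum r.
rewrite kernel_sum_cons ip_lincombr // IHr k_ip //.
by rewrite /eval_sum big_cons mul1r mulrC.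
Qed.

Lemma ip_kernel_sum_invariant (phi : X -> X) r :
  (forall x y, k (phi x) (phi y) = k x y) ->
  ip (kernel_sum [seq (p.1, phi p.2) | p <- r]) (kernel_sum [seq (p.1, phi p.2) | p <- r])
  = ip (kernel_sum r) (kernel_sum r).
Proof.
move=> k_phi; rewrite !(ip_kernel_sum _ (V_kernel_sum _)) /eval_sum big_map.
apply: eq_bigr => p _ /=; congr (_ * _).
by rewrite /kernel_sum big_map; apply: eq_bigr => q _; rewrite k_phi.
Qed.

Section Energy.
Variable h : X -> R.

Definition energy (r : seq (R * X)) : R :=
  ip (kernel_sum r) (kernel_sum r) / 2 - eval_sum h r.

Lemma energy_midpoint r s :
  energy (lincomb_pts (1 / 2) r (1 / 2) s) = (energy r + energy s) / 2
    - ip (kernel_sum r \- kernel_sum s) (kernel_sum r \- kernel_sum s) / 8.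
Proof.
have Vr := V_kernel_sum r; have Vs := V_kernel_sum s.
by rewrite /energy kernel_sum_lincomb eval_sum_lincomb sub_lincomb !ip_lincomb //; field.
Qed.

Lemma energy_shift r s t :
  energy (lincomb_pts 1 r t s) = energy r
    + t * (ip (kernel_sum r) (kernel_sum s) - eval_sum h s)
    + ip (kernel_sum s) (kernel_sum s) / 2 * t ^+ 2.
Proof.
have Vr := V_kernel_sum r; have Vs := V_kernel_sum s.
by rewrite /energy kernel_sum_lincomb eval_sum_lincomb ip_lincomb //; field.
Qed.

Lemma energy_ge (C : R) :
  (forall r, `|eval_sum h r| <= C * ipnorm ip (kernel_sum r)) ->
  forall r, - (C ^+ 2) / 2 <= energy r.
Proof.
move=> h_bound r; have := h_bound r; rewrite /energy -(sqr_ipnorm (V_kernel_sum r)).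
have := ler_norm (eval_sum h r); have := sqr_ge0 (ipnorm ip (kernel_sum r) - C); nra.
Qed.

Lemma energy_dist (Vh : V h) r :
  energy r = (ip (kernel_sum r \- h) (kernel_sum r \- h) - ip h h) / 2.
Proof.
have Vr := V_kernel_sum r.
by rewrite /energy -ip_kernel_sum // sub_lincomb ip_lincomb // (ipC Vh Vr); field.
Qed.

Section NearMinimizers.
Variable m : R.
Hypothesis m_le_energy : forall r, m <= energy r.

Lemma near_minimizers_close r s :
  ip (kernel_sum r \- kernel_sum s) (kernel_sum r \- kernel_sum s)
    <= 4 * ((energy r - m) + (energy s - m)).
Proof. have := m_le_energy (lincomb_pts (1 / 2) r (1 / 2) s); rewrite energy_midpoint; lra. Qed.

Lemma near_minimizer_eval r x :
  (kernel_sum r x - h x) ^+ 2 <= 2 * k x x * (energy r - m).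
Proof.
have [Vk k_ip] := k_reproducing x.
have k_ge0 : 0 <= k x x / 2 by rewrite -(k_ip _ Vk) divr_ge0 ?ip_ge0.
suff : (kernel_sum r x - h x) ^+ 2 <= 4 * (energy r - m) * (k x x / 2) by lra.
apply: quadratic_ge_discriminant k_ge0 _ => t.
have := m_le_energy (lincomb_pts 1 r t [:: (1, x)]).
rewrite energy_shift kernel_sum1 eval_sum1 (k_ip _ (V_kernel_sum r)) (k_ip _ Vk); lra.
Qed.

End NearMinimizers.
End Energy.

Lemma cvg_pointwise_of_ipnorm (u : nat -> X -> R) f :
  (forall n, V (u n)) -> V f -> (fun n => ipnorm ip (u n \- f)) @ \oo --> 0 ->
  forall x, (fun n => u n x) @ \oo --> f x.
Proof.
move=> Vu Vf u_f x; have [Vk k_ip] := k_reproducing x.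
apply: (@cvg_of_sqr_dist_le _ _ (fun n => ipnorm ip (u n \- f) ^+ 2) (k x x)).
  move=> n; have V_uf : V (u n \- f) by rewrite sub_lincomb; exact: V_lincomb.
  by have := ip_cauchy_schwarz V_uf Vk; rewrite !k_ip // sqr_ipnorm // mulrC.
by rewrite -(mul0r 0); under eq_fun do rewrite expr2; apply: cvgM.
Qed.

Hypothesis V_complete : forall u : nat -> X -> R, (forall n, V (u n)) ->
  (forall e : R, 0 < e -> exists N, forall i j, (N <= i)%N -> (N <= j)%N ->
     ipnorm ip (u i \- u j) < e) ->
  exists2 f, V f & (fun n => ipnorm ip (u n \- f)) @ \oo --> (0 : R).

Lemma mem_rkhs_of_eval_sum_le (h : X -> R) (C : R) : 0 <= C ->
  (forall r, `|eval_sum h r| <= C * ipnorm ip (kernel_sum r)) ->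
  V h /\ ipnorm ip h <= C.
Proof.
move=> C_ge0 h_bound.
have [m m_le [rs rsP]] := exists_minimizing_seq [::] (energy_ge h_bound).
pose u n := kernel_sum (rs n).
have Vu n : V (u n) := V_kernel_sum (rs n).
have u_cauchy (e : R) : 0 < e -> exists N, forall i j, (N <= i)%N -> (N <= j)%N ->
    ipnorm ip (u i \- u j) < e.
  move=> e_gt0; have e8_gt0 : 0 < e ^+ 2 / 8 by rewrite divr_gt0 ?exprn_gt0.
  have [N _ HN] : \forall n \near \oo, (n.+1%:R^-1 : R) < e ^+ 2 / 8 :=
    near_infty_natSinv_lt (PosNum e8_gt0).
  exists N => i j /HN hi /HN hj.
  rewrite -(@ltr_pXn2r _ 2) ?nnegrE ?sqrtr_ge0 ?ltW // sqr_ipnorm; last first.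
    by rewrite sub_lincomb; exact: V_lincomb.
  apply: le_lt_trans (near_minimizers_close m_le _ _) _.
  have := rsP i; have := rsP j.
  by move: (i.+1%:R^-1) (j.+1%:R^-1) hi hj => a b; lra.
have [f Vf u_f] := V_complete Vu u_cauchy.
have f_h : f = h.
  apply: funext => x.
  have k_ge0 : 0 <= k x x by have [Vk <-] := k_reproducing x; rewrite ?ip_ge0.
  have u_h : (fun n => u n x) @ \oo --> h x.
    apply: (@cvg_of_sqr_dist_le _ _ (fun n => n.+1%:R^-1) (2 * k x x)); last exact: cvg_harmonic.
    move=> n; apply: le_trans (near_minimizer_eval m_le _ _) _.
    by rewrite ler_wpM2l ?mulr_ge0 // lerBlDl.
  exact: cvg_unique (cvg_pointwise_of_ipnorm (x := x) Vu Vf u_f) u_h.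
subst f; split => //.
suff h_sqr : ip h h <= C ^+ 2 by rewrite -(ger0_norm C_ge0) -sqrtr_sqr ler_wsqrtr.
apply: (@ler_cvg_to _ \oo _ _ (cst (ip h h)) (fun n => C ^+ 2 + ipnorm ip (u n \- h) ^+ 2)).
- exact: cvg_cst.
- rewrite -[X in _ --> X]addr0 -(mul0r 0); apply: cvgD; first exact: cvg_cst.
  by under eq_fun do rewrite expr2; apply: cvgM.
- near=> n; have V_uh : V (u n \- h) by rewrite sub_lincomb; exact: V_lincomb.
  by have := energy_ge h_bound (rs n); rewrite (energy_dist Vf) -(sqr_ipnorm V_uh) /=; lra.
Unshelve. all: by end_near.
Qed.

End Kernel.
End InnerProduct.

Section Integration.
Context d (T : measurableType d) (R : realType).

Lemma bounded_measurable_integrable (mu : {finite_measure set T -> \bar R}) (f : T -> R) :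
  bounded_measurable f -> mu.-integrable [set: T] (EFin \o f).
Proof.
move=> [mf [M fM]]; apply: measurable_bounded_integrable => //.
  by rewrite ltey_eq fin_num_measure.
rewrite /bounded_near; near=> B => x _ /=; apply: le_trans (fM x) _.
by near: B; apply: nbhs_pinfty_ge; exact: num_real.
Unshelve. all: by end_near.
Qed.

Lemma integrable_Rsum (mu : measure T R) (D : set T) (I : Type) (s : seq I)
    (f : I -> T -> R) : measurable D ->
  (forall i, mu.-integrable D (EFin \o f i)) ->
  mu.-integrable D (EFin \o (fun x => \sum_(i <- s) f i x)).
Proof.
move=> mD fi; apply: (eq_integrable mD (fun x => \sum_(i <- s) (f i x)%:E)).
  by move=> x _; rewrite /= sumEFin.
by apply: integrable_sum => // i _; exact: fi.
Qed.

Lemma Rintegral_sum (mu : measure T R) (D : set T) (I : Type) (s : seq I)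
    (f : I -> T -> R) : measurable D ->
  (forall i, mu.-integrable D (EFin \o f i)) ->
  \int[mu]_(x in D) \sum_(i <- s) f i x = \sum_(i <- s) \int[mu]_(x in D) f i x.
Proof.
move=> mD fi; rewrite /Rintegral (sum_fine s (fun i _ => integrable_fin_num mD (fi i))).
rewrite -integral_sum //; congr fine; apply: eq_integral => x _.
by rewrite sumEFin.
Qed.

Lemma normr_Rintegral_le (mu : probability T R) (f : T -> R) (B : R) :
  mu.-integrable [set: T] (EFin \o f) -> (forall x, `|f x| <= B) ->
  `|\int[mu]_x f x| <= B.
Proof.
move=> fi fB.
have intB (c : R) : \int[mu]_x c = c.
  by rewrite Rintegral_cst // [X in fine X]probability_setT mulr1.
have cst_int (c : R) := finite_measure_integrable_cst mu c measurableT.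
have fB' x : - B <= f x <= B by rewrite -ler_norml.
rewrite ler_norml; apply/andP; split.
- rewrite -[X in X <= _](intB (- B)); apply: (le_Rintegral measurableT (cst_int _) fi) => x _.
  by case/andP: (fB' x).
- rewrite -[X in _ <= X](intB B); apply: (le_Rintegral measurableT fi (cst_int _)) => x _.
  by case/andP: (fB' x).
Qed.

End Integration.

Section Symmetrization.
Context (R : realType) (S : ptopologicalType) d (X : measurableType d).
Variables (mu : probability (borel S) R) (T : borel S * X -> X).
Hypothesis T_measurable : measurable_fun [set: borel S * X] T.

Lemma integrable_orbit (g : X -> R) x : bounded_measurable g ->
  mu.-integrable [set: borel S] (EFin \o (fun s => g (T (s, x)))).
Proof.
move=> [mg [M gM]]; apply: bounded_measurable_integrable; split; last by exists M.
exact: measurableT_comp mg (measurable_fun_pair1 x T_measurable).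
Qed.

Lemma eval_sum_symmetrize (g : X -> R) r : bounded_measurable g ->
  eval_sum (symmetrize mu T g) r = \int[mu]_s eval_sum g [seq (p.1, T (s, p.2)) | p <- r].
Proof.
move=> bg; have int_p (p : R * X) :
    mu.-integrable [set: borel S] (EFin \o (fun s => p.1 * g (T (s, p.2)))) :=
  integrableZl measurableT p.1 (integrable_orbit p.2 bg).
under [RHS]eq_Rintegral do rewrite /eval_sum big_map.
rewrite (Rintegral_sum _ measurableT int_p).
by apply: eq_bigr => p _; rewrite RintegralZl // integrable_orbit.
Qed.

Lemma eval_sum_symmetrize_le (V : set (X -> R)) (ip : (X -> R) -> (X -> R) -> R)
    (k : X -> X -> R) (g : X -> R) r :
  separable_rkhs V ip k -> (forall s x y, k (T (s, x)) (T (s, y)) = k x y) -> V g ->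
  `|eval_sum (symmetrize mu T g) r| <= ipnorm ip g * ipnorm ip (kernel_sum k r).
Proof.
move=> [[bm [V0 VD VZ] [ipC ipDl ipZl ip_ge0 _]] _ _ k_rep] k_inv Vg.
rewrite (eval_sum_symmetrize _ (bm g Vg)); apply: normr_Rintegral_le => [|s].
  under eq_fun do rewrite /eval_sum big_map.
  apply: integrable_Rsum => // p.
  exact: (integrableZl measurableT p.1 (integrable_orbit p.2 (bm g Vg))).
pose rs := [seq (p.1, T (s, p.2)) | p <- r].
rewrite -(ip_kernel_sum VD VZ ipC ipDl ipZl V0 k_rep _ Vg).
apply: le_trans (normr_ip_le VD VZ ipC ipDl ipZl ip_ge0 Vg (V_kernel_sum VD VZ V0 k_rep rs)) _.
by rewrite /ipnorm (ip_kernel_sum_invariant VD VZ ipC ipDl ipZl V0 k_rep _ (k_inv s)).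
Qed.

End Symmetrization.

Theorem lemma2 (R : realType) (d : measure_display) (X : measurableType d)
  (Sigma : ptopologicalType) (mul : Sigma -> Sigma -> Sigma)
  (inv : Sigma -> Sigma) (one : Sigma)
  (mu : probability (borel Sigma) R)
  (T : borel Sigma * X -> X)
  (V : set (X -> R)) (ip : (X -> R) -> (X -> R) -> R) (k : X -> X -> R) :
  compact_hausdorff_group mul inv one ->
  haar_probability mul mu ->
  group_action mul one T ->
  measurable_fun [set: borel Sigma * X] T ->
  separable_rkhs V ip k ->
  (forall (s : Sigma) (x y : X), k (T (s, x)) (T (s, y)) = k x y) ->
  let Gamma := [set g : X -> R | V g /\ ipnorm ip g <= 1] in
  [set symmetrize mu T g | g in Gamma] `<=` Gamma.
Proof.
move=> _ _ _ T_measurable rkhs k_inv Gamma _ [g [Vg g_le1] <-].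
have [[_ [V0 VD VZ] [ipC ipDl ipZl ip_ge0 _]] V_complete _ k_rep] := rkhs.
have [Vh h_le] := mem_rkhs_of_eval_sum_le VD VZ ipC ipDl ipZl ip_ge0 V0 k_rep V_complete
  (sqrtr_ge0 _) (fun r => eval_sum_symmetrize_le mu T_measurable r rkhs k_inv Vg).
by split => //; exact: le_trans h_le g_le1.
Qed.
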